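(* Let $A$ be the $C^*$-subalgebra of $l^\infty(\mathbb N)$ consisting of all bounded sequences $\{a_n\}_{n\in\mathbb N}$ such that $\lim_{n\to\infty}|a_{n+1}-a_n|=0$ (so $A=C(\nu\mathbb N)$, where $\nu\mathbb N$ is the Higson compactification of $\mathbb N$). Then $A$ is $C^*$-reflexive.
   Context: A $C^*$-algebra $A$ is called $C^*$-reflexive if the standard Hilbert $A$-module $H_A=l_2(A)$ (sequences $(a_i)$ in $A$ with $\sum_ia_i^*a_i$ norm convergent, inner product $\langle a,b\rangle=\sum_i a_i^*b_i$) satisfies $H_A''=H_A$, where for a Hilbert $A$-module $M$, $M'$ denotes the module of bounded $A$-module maps $M\to A$, $M''=(M')'$ (Paschke's conventions), and $M\subseteq M''$ via the canonical isometric inclusion. *)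

From Stdlib Require Import Reals.
From Coquelicot Require Import Coquelicot.
Open Scope R_scope.

Definition seqC := nat -> C.

Definition inA (a : seqC) : Prop :=
  (exists M : R, forall n, Cmod (a n) <= M) /\
  is_lim_seq (fun n => Cmod (Cminus (a (S n)) (a n))) 0.

Definition normA_le (a : seqC) (r : R) : Prop := forall n, Cmod (a n) <= r.

(** Raw sequences (x_i)_i of elements of l^oo: x i is the i-th coordinate. *)
Definition HAraw := nat -> seqC.

(** Partial sums  sum_{i=0}^N |x_i(m)|^2  of <x,x> = sum_i x_i^* x_i, evaluated at m. *)
Definition psum (x : HAraw) (m N : nat) : R :=
  sum_n (fun i => (Cmod (x i m)) ^ 2) N.

(** Membership in H_A = l_2(A): all x_i in A and sum_i x_i^* x_i norm
    (i.e. uniformly) convergent in A. *)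
Definition inHA (x : HAraw) : Prop :=
  (forall i, inA (x i)) /\
  (forall eps : R, 0 < eps -> exists N : nat,
     forall p q m : nat, (N <= p)%nat -> (N <= q)%nat ->
       Rabs (psum x m p - psum x m q) < eps).

(** ||x||_{H_A} <= r, i.e. ||<x,x>||_A <= r^2. *)
Definition HA_norm_le (x : HAraw) (r : R) : Prop :=
  0 <= r /\ forall m N, psum x m N <= r ^ 2.

Definition HA_add (x y : HAraw) : HAraw := fun i n => Cplus (x i n) (y i n).
Definition HA_act (x : HAraw) (a : seqC) : HAraw := fun i n => Cmult (x i n) (a n).

(** Candidate elements of H_A' : maps H_A -> A (only values on H_A matter). *)
Definition dualT := HAraw -> seqC.

Definition in_dual (f : dualT) : Prop :=
  (forall x, inHA x -> inA (f x)) /\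
  (forall x y, inHA x -> inHA y ->
     f (HA_add x y) = (fun n => Cplus (f x n) (f y n))) /\
  (forall x a, inHA x -> inA a ->
     f (HA_act x a) = (fun n => Cmult (f x n) (a n))) /\
  (exists K : R, 0 <= K /\
     forall x r, inHA x -> HA_norm_le x r -> normA_le (f x) (K * r)).

(** Module structure of H_A' (Paschke): (f + g)(x) = f x + g x,
    (f . a)(x) = a^* f(x). *)
Definition dual_add (f g : dualT) : dualT := fun x n => Cplus (f x n) (g x n).
Definition dual_act (f : dualT) (a : seqC) : dualT :=
  fun x n => Cmult (Cconj (a n)) (f x n).

Definition dual_norm_le (f : dualT) (r : R) : Prop :=
  0 <= r /\ forall x s, inHA x -> HA_norm_le x s -> normA_le (f x) (r * s).

Definition in_bidual (F : dualT -> seqC) : Prop :=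
  (forall f, in_dual f -> inA (F f)) /\
  (forall f g, in_dual f -> in_dual g ->
     F (dual_add f g) = (fun n => Cplus (F f n) (F g n))) /\
  (forall f a, in_dual f -> inA a ->
     F (dual_act f a) = (fun n => Cmult (F f n) (a n))) /\
  (exists K : R, 0 <= K /\
     forall f r, in_dual f -> dual_norm_le f r -> normA_le (F f) (K * r)).

(** A is C*-reflexive: every element of H_A'' is in the image of the canonical
    inclusion H_A -> H_A'', x |-> (f |-> f(x)^* ). *)
Definition A_Cstar_reflexive : Prop :=
  forall F : dualT -> seqC, in_bidual F ->
    exists x : HAraw, inHA x /\
      forall f, in_dual f -> F f = (fun n => Cconj (f x n)).

From Stdlib Require Import Arith Reals Lra Lia Psatz Classical ClassicalEpsilon FunctionalExtensionality.
From Coquelicot Require Import Coquelicot.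
Open Scope R_scope.

(* The candidate preimage of F is X_i := (F coord_i)^*, coord_i the i-th coordinate functional.
   Linearity of F settles finite combinations of coordinate functionals, and at each point n
   the value F f n only depends on the row y |-> f y n, continuously in its norm; since the
   coefficients f(e_i)(n) of a row are square-summable, approximating f row by row gives
   F f = (f X)^*, once X is known to lie in H_A.
   Testing F against finite coordinate combinations bounds the partial sums
   sum_i |X_i(m)|^2, so they converge at each m.  The convergence is uniform in m by the
   Higson condition: otherwise there are blocks of indices p_k < i <= q_k with p_k -> oo
   and of mass >= eps at points n_k with n_(k+1) > n_k + 1, and the functional pairing, at
   each n_k, the k-th block with the normalised k-th block of X lies in H_A' (its values
   tend to 0).  F of it is 1 at every n_k and 0 at every n_k + 1, so it is not in A. *)

Lemma Cconj_RtoC (r : R) : Cconj (RtoC r) = RtoC r.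
Proof. apply injective_projections; simpl; ring. Qed.

Lemma Cconj_mul_self (z : C) : Cmult (Cconj z) z = RtoC (Cmod z ^ 2).
Proof. rewrite Cmod2_conj. ring. Qed.

Lemma Cminus_eq_of_small (a b : C) : (forall eta, 0 < eta -> Cmod (a - b)%C <= eta) -> a = b.
Proof.
  intros H. assert (E : Cmod (a - b)%C = 0).
  { apply Rle_antisym; [|apply Cmod_ge_0]. apply Rle_plus_epsilon. intros eta Heta.
    rewrite Rplus_0_l. now apply H. }
  apply Cmod_eq_0 in E. replace a with ((a - b) + b)%C by ring. rewrite E. ring.
Qed.

Lemma mul_div_double_succ_le K e : 0 <= K -> 0 < e -> K * (e / (2 * (K + 1))) <= e / 2.
Proof.
  intros HK He. apply Rmult_le_reg_r with (2 * (K + 1)); [lra|].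
  replace (K * (e / (2 * (K + 1))) * (2 * (K + 1))) with (K * e) by (field; lra).
  replace (e / 2 * (2 * (K + 1))) with (K * e + e) by (field; lra). lra.
Qed.

(* Coquelicot states its sum lemmas in an abstract monoid; these instances at [R] and [C]
   rewrite and close with [ring] and [lra] directly. *)
Lemma sum_n_m_R0 p q : sum_n_m (fun _ => 0) p q = 0.
Proof. exact (sum_n_m_const_zero (G := R_AbelianMonoid) p q). Qed.

Lemma sum_n_m_Rmult_l c (u : nat -> R) p q :
  sum_n_m (fun i => c * u i) p q = c * sum_n_m u p q.
Proof. exact (sum_n_m_mult_l c u p q). Qed.

Lemma sum_n_m_Rplus (u v : nat -> R) p q :
  sum_n_m (fun i => u i + v i) p q = sum_n_m u p q + sum_n_m v p q.
Proof. exact (sum_n_m_plus u v p q). Qed.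

Lemma sum_n_m_Rext (u v : nat -> R) p q :
  (forall i, (p <= i <= q)%nat -> u i = v i) -> sum_n_m u p q = sum_n_m v p q.
Proof. exact (sum_n_m_ext_loc u v p q). Qed.

Lemma sum_n_m_Cext (u v : nat -> C) p q :
  (forall i, (p <= i <= q)%nat -> u i = v i) -> sum_n_m u p q = sum_n_m v p q.
Proof. exact (sum_n_m_ext_loc u v p q). Qed.

Lemma sum_n_m_nonneg (u : nat -> R) p q :
  (forall i, 0 <= u i) -> 0 <= sum_n_m u p q.
Proof. intros Hu. rewrite <- (sum_n_m_R0 p q). now apply sum_n_m_le. Qed.

Lemma sum_n_m_term_le (u : nat -> R) p q k :
  (forall i, 0 <= u i) -> (p <= k <= q)%nat -> u k <= sum_n_m u p q.
Proof.
  intros Hu [Hpk Hkq].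
  assert (Hk : sum_n_m u k q = u k + sum_n_m u (S k) q) by exact (sum_Sn_m u k q Hkq).
  assert (0 <= sum_n_m u (S k) q) by now apply sum_n_m_nonneg.
  destruct k as [|k].
  - replace p with O by lia. lra.
  - rewrite (sum_n_m_Chasles u p k q) by lia.
    assert (0 <= sum_n_m u p k) by now apply sum_n_m_nonneg.
    change (plus ?a ?b) with (a + b). lra.
Qed.

Lemma sum_n_m_le_sum_n (u : nat -> R) p q :
  (forall i, 0 <= u i) -> sum_n_m u p q <= sum_n u q.
Proof.
  intros Hu. destruct p as [|p]; [apply Rle_refl|].
  destruct (le_lt_dec p q) as [Hpq|Hqp].
  - unfold sum_n. rewrite (sum_n_m_Chasles u 0 p q) by lia.
    assert (0 <= sum_n_m u 0 p) by now apply sum_n_m_nonneg.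
    change (plus ?a ?b) with (a + b). lra.
  - rewrite sum_n_m_zero by lia. now apply sum_n_m_nonneg.
Qed.

Lemma sum_n_m_sq_eq0 (a : nat -> R) p q k :
  sum_n_m (fun i => a i ^ 2) p q = 0 -> (p <= k <= q)%nat -> a k = 0.
Proof.
  intros H Hk.
  assert (a k ^ 2 <= 0).
  { rewrite <- H. apply (sum_n_m_term_le (fun i => a i ^ 2)); auto. intros; apply pow2_ge_0. }
  nra.
Qed.

(* Cauchy-Schwarz, from [2 a b u v <= a^2 v^2 + b^2 u^2] summed over the range. *)
Lemma sum_n_m_mul_le_sqrt (a b : nat -> R) p q :
  sum_n_m (fun i => a i * b i) p q <=
  sqrt (sum_n_m (fun i => a i ^ 2) p q) * sqrt (sum_n_m (fun i => b i ^ 2) p q).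
Proof.
  set (A := sum_n_m (fun i => a i ^ 2) p q).
  set (B := sum_n_m (fun i => b i ^ 2) p q).
  assert (HA : 0 <= A) by (apply sum_n_m_nonneg; intros; apply pow2_ge_0).
  assert (HB : 0 <= B) by (apply sum_n_m_nonneg; intros; apply pow2_ge_0).
  set (u := sqrt A). set (v := sqrt B).
  assert (Hu : 0 <= u) by apply sqrt_pos. assert (Hv : 0 <= v) by apply sqrt_pos.
  destruct (Req_dec (u * v) 0) as [Huv|Huv].
  - assert (Hzero : A = 0 \/ B = 0).
    { destruct (Rmult_integral _ _ Huv) as [E|E]; [left|right]; now apply sqrt_eq_0. }
    rewrite Huv, <- (sum_n_m_R0 p q). right. apply sum_n_m_ext_loc. intros i Hi.
    destruct Hzero as [E|E].
    + now rewrite (sum_n_m_sq_eq0 a p q i E Hi), Rmult_0_l.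
    + now rewrite (sum_n_m_sq_eq0 b p q i E Hi), Rmult_0_r.
  - assert (Hsum : 2 * (u * v) * sum_n_m (fun i => a i * b i) p q <= A * v ^ 2 + B * u ^ 2).
    { rewrite <- sum_n_m_Rmult_l. unfold A, B.
      rewrite (Rmult_comm _ (v ^ 2)), (Rmult_comm _ (u ^ 2)), <- !sum_n_m_Rmult_l, <- sum_n_m_Rplus.
      apply sum_n_m_le. intros i. pose proof (pow2_ge_0 (v * a i - u * b i)). nra. }
    assert (Eu : u ^ 2 = A) by (unfold u; rewrite <- Rsqr_pow2; now apply Rsqr_sqrt).
    assert (Ev : v ^ 2 = B) by (unfold v; rewrite <- Rsqr_pow2; now apply Rsqr_sqrt).
    rewrite <- Eu, <- Ev in Hsum.
    apply Rmult_le_reg_l with (2 * (u * v)); [nra|]. nra.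
Qed.

Lemma Cmod_sum_n_m_mul_le (c y : nat -> C) p q :
  Cmod (sum_n_m (fun i => (c i * y i)%C) p q) <=
  sqrt (sum_n_m (fun i => Cmod (c i) ^ 2) p q) * sqrt (sum_n_m (fun i => Cmod (y i) ^ 2) p q).
Proof.
  eapply Rle_trans; [apply (norm_sum_n_m (V := C_NormedModule))|].
  eapply Rle_trans; [|apply sum_n_m_mul_le_sqrt].
  right. apply sum_n_m_ext. intros i. apply Cmod_mult.
Qed.

Lemma sum_n_m_RtoC (u : nat -> R) p q :
  sum_n_m (fun i => RtoC (u i)) p q = RtoC (sum_n_m u p q).
Proof.
  destruct (le_lt_dec p q) as [Hpq|Hqp].
  - induction Hpq as [|q Hpq IH].
    + now rewrite !sum_n_n.
    + rewrite !sum_n_Sm by lia. rewrite IH. exact (eq_sym (RtoC_plus _ _)).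
  - rewrite !sum_n_m_zero by lia. reflexivity.
Qed.

Lemma sqrt_le_of_sq_le a s : 0 <= s -> a <= s ^ 2 -> sqrt a <= s.
Proof. intros Hs Ha. rewrite <- (sqrt_pow2 s Hs). apply sqrt_le_1_alt. exact Ha. Qed.

Lemma le_sq_of_le_mul_sqrt P K : 0 <= P -> 0 <= K -> P <= K * sqrt P -> P <= K ^ 2.
Proof.
  intros HP HK H. pose proof (sqrt_sqrt P HP) as E. pose proof (sqrt_pos P).
  assert (sqrt P <= K) by nra. nra.
Qed.

Lemma nonneg_series_blocks_small (u : nat -> R) B :
  (forall i, 0 <= u i) -> (forall N, sum_n u N <= B) ->
  forall d, 0 < d -> exists N, forall p q, (N <= p)%nat -> sum_n_m u (S p) q < d.
Proof.
  intros Hu HB d Hd.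
  assert (Hlim : ex_finite_lim_seq (sum_n u)).
  { apply ex_finite_lim_seq_incr with B; [|exact HB].
    intros N. rewrite sum_Sn. change (sum_n u N <= sum_n u N + u (S N)). specialize (Hu (S N)). lra. }
  apply ex_lim_seq_cauchy_corr in Hlim. destruct (Hlim (mkposreal d Hd)) as [N HN].
  exists N. intros p q Hp. destruct (le_lt_dec p q) as [Hpq|Hqp].
  - assert (E : sum_n_m u (S p) q = sum_n u q - sum_n u p) by exact (sum_n_m_sum_n u p q Hpq).
    rewrite E. specialize (HN q p ltac:(lia) Hp). simpl in HN.
    eapply Rle_lt_trans; [apply Rle_abs|exact HN].
  - rewrite sum_n_m_zero by lia. exact Hd.
Qed.

Lemma uniform_bound_upto (P : nat -> nat -> Prop) :
  (forall m, exists N, P m N) -> (forall m N N', (N <= N')%nat -> P m N -> P m N') ->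
  forall m0, exists N, forall m, (m <= m0)%nat -> P m N.
Proof.
  intros HP Hmono m0. induction m0 as [|m0 [N HN]].
  - destruct (HP O) as [N HN]. exists N. intros m Hm. now replace m with O by lia.
  - destruct (HP (S m0)) as [N' HN']. exists (max N N'). intros m Hm.
    destruct (Nat.eq_dec m (S m0)) as [->|Hne].
    + apply Hmono with N'; [lia|exact HN'].
    + apply Hmono with N; [lia|apply HN; lia].
Qed.

Lemma spaced_sequence (P : nat -> nat -> nat -> Prop) :
  (forall B m0, exists p q n, (B <= p)%nat /\ (m0 < n)%nat /\ P p q n) ->
  exists p q nk : nat -> nat,
    forall k, (k <= p k)%nat /\ (S (nk k) < nk (S k))%nat /\ P (p k) (q k) (nk k).
Proof.
  intros HP.
  assert (ch : forall B m0, {t : nat * nat * nat |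
    (B <= fst (fst t))%nat /\ (m0 < snd t)%nat /\ P (fst (fst t)) (snd (fst t)) (snd t)}).
  { intros B m0. apply constructive_indefinite_description.
    destruct (HP B m0) as [p [q [n H]]]. now exists (p, q, n). }
  set (t := nat_rect (fun _ => (nat * nat * nat)%type) (proj1_sig (ch O O))
              (fun k tk => proj1_sig (ch (S k) (S (snd tk))))).
  exists (fun k => fst (fst (t k))), (fun k => snd (fst (t k))), (fun k => snd (t k)).
  intros k. split; [|split].
  - destruct k; apply (proj2_sig (ch _ _)).
  - apply (proj2_sig (ch (S k) (S (snd (t k))))).
  - destruct k; apply (proj2_sig (ch _ _)).
Qed.

Lemma inA_c0 (a : seqC) : is_lim_seq (fun n => Cmod (a n)) 0 -> inA a.
Proof.
  intros Ha. split.
  - destruct (filterlim_bounded (V := R_NormedModule) (fun n => Cmod (a n))) as [M HM].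
    { now exists 0. }
    exists M. intros n. specialize (HM n). now rewrite <- (Rabs_pos_eq (Cmod (a n))) by apply Cmod_ge_0.
  - apply is_lim_seq_le_le with (fun _ => 0) (fun n => Cmod (a (S n)) + Cmod (a n)).
    + intros n. split; [apply Cmod_ge_0|].
      eapply Rle_trans; [apply Cmod_triangle|]. now rewrite Cmod_opp.
    + apply is_lim_seq_const.
    + replace (Finite 0) with (Rbar_plus 0 0) by (simpl; f_equal; ring).
      apply is_lim_seq_plus'; [apply (is_lim_seq_incr_1 (fun n => Cmod (a n)))|]; exact Ha.
Qed.

Lemma inA_const (z : C) : inA (fun _ => z).
Proof.
  split; [now exists (Cmod z)|].
  apply is_lim_seq_ext with (fun _ => 0); [|apply is_lim_seq_const].
  intros n. replace (z - z)%C with (RtoC 0) by ring. now rewrite Cmod_0.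
Qed.

Definition dirac (m : nat) (z : C) : seqC := fun n => if Nat.eq_dec n m then z else RtoC 0.

Lemma inA_dirac m z : inA (dirac m z).
Proof.
  apply inA_c0. apply is_lim_seq_ext_loc with (fun _ => 0); [|apply is_lim_seq_const].
  exists (S m). intros n Hn. unfold dirac. destruct (Nat.eq_dec n m); [lia|]. now rewrite Cmod_0.
Qed.

Lemma inA_conj (a : seqC) : inA a -> inA (fun n => Cconj (a n)).
Proof.
  intros [[M HM] Hl]. split.
  - exists M. intros n. now rewrite Cmod_conj.
  - eapply is_lim_seq_ext; [|exact Hl]. intros n. now rewrite <- Cminus_conj, Cmod_conj.
Qed.

Lemma inA_plus (a b : seqC) : inA a -> inA b -> inA (fun n => (a n + b n)%C).
Proof.
  intros [[M HM] Ha] [[M' HM'] Hb]. split.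
  - exists (M + M'). intros n. eapply Rle_trans; [apply Cmod_triangle|]. now apply Rplus_le_compat.
  - apply is_lim_seq_le_le with (fun _ => 0)
      (fun n => Cmod (a (S n) - a n)%C + Cmod (b (S n) - b n)%C).
    + intros n. split; [apply Cmod_ge_0|].
      replace (a (S n) + b (S n) - (a n + b n))%C with ((a (S n) - a n) + (b (S n) - b n))%C by ring.
      apply Cmod_triangle.
    + apply is_lim_seq_const.
    + replace (Finite 0) with (Rbar_plus 0 0) by (simpl; f_equal; ring).
      now apply is_lim_seq_plus'.
Qed.

Lemma inA_mult (a b : seqC) : inA a -> inA b -> inA (fun n => (a n * b n)%C).
Proof.
  intros [[M HM] Ha] [[M' HM'] Hb].
  assert (HM0 : 0 <= M) by (eapply Rle_trans; [apply Cmod_ge_0|apply (HM O)]).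
  assert (HM0' : 0 <= M') by (eapply Rle_trans; [apply Cmod_ge_0|apply (HM' O)]).
  split.
  - exists (M * M'). intros n. rewrite Cmod_mult.
    apply Rmult_le_compat; auto using Cmod_ge_0.
  - apply is_lim_seq_le_le with (fun _ => 0)
      (fun n => M * Cmod (b (S n) - b n)%C + M' * Cmod (a (S n) - a n)%C).
    + intros n. split; [apply Cmod_ge_0|].
      replace (a (S n) * b (S n) - a n * b n)%C
        with (a (S n) * (b (S n) - b n) + b n * (a (S n) - a n))%C by ring.
      eapply Rle_trans; [apply Cmod_triangle|]. rewrite !Cmod_mult.
      apply Rplus_le_compat; apply Rmult_le_compat_r; auto using Cmod_ge_0.
    + apply is_lim_seq_const.
    + replace (Finite 0) with (Rbar_plus (M * 0) (M' * 0)) by (simpl; f_equal; ring).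
      apply is_lim_seq_plus'; apply (is_lim_seq_scal_l _ _ 0); assumption.
Qed.

(** * The Hilbert module [H_A] *)

Definition blocksum (x : HAraw) (m p q : nat) : R := sum_n_m (fun i => Cmod (x i m) ^ 2) (S p) q.

Lemma blocksum_nonneg x m p q : 0 <= blocksum x m p q.
Proof. apply sum_n_m_nonneg. intros; apply pow2_ge_0. Qed.

Lemma psum_sub x m p q : (p <= q)%nat -> psum x m q - psum x m p = blocksum x m p q.
Proof. intros Hpq. exact (eq_sym (sum_n_m_sum_n _ p q Hpq)). Qed.

Lemma psum_mono x m p q : (p <= q)%nat -> psum x m p <= psum x m q.
Proof. intros Hpq. pose proof (psum_sub x m p q Hpq). pose proof (blocksum_nonneg x m p q). lra. Qed.

Lemma psum_coord_le x m j : Cmod (x j m) ^ 2 <= psum x m j.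
Proof. apply (sum_n_m_term_le (fun i => Cmod (x i m) ^ 2)); [intros; apply pow2_ge_0|lia]. Qed.

Lemma blocksum_small_of_inHA x : inHA x ->
  forall d, 0 < d -> exists N, forall m p q, (N <= p)%nat -> blocksum x m p q < d.
Proof.
  intros [_ Hx] d Hd. destruct (Hx d Hd) as [N HN]. exists N. intros m p q Hp.
  destruct (le_lt_dec p q) as [Hpq|Hqp].
  - rewrite <- psum_sub by exact Hpq. specialize (HN q p m ltac:(lia) Hp).
    apply Rabs_lt_between in HN. lra.
  - unfold blocksum. rewrite sum_n_m_zero by lia. exact Hd.
Qed.

Lemma inHA_of_blocksum_small x : (forall i, inA (x i)) ->
  (forall d, 0 < d -> exists N, forall m p q, (N <= p)%nat -> blocksum x m p q < d) -> inHA x.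
Proof.
  intros HA Hx. split; [exact HA|]. intros d Hd. destruct (Hx d Hd) as [N HN].
  exists N. intros p q m Hp Hq. destruct (le_lt_dec p q) as [Hpq|Hqp].
  - pose proof (psum_sub x m p q Hpq) as E. pose proof (blocksum_nonneg x m p q).
    rewrite Rabs_minus_sym, Rabs_pos_eq, E by lra. now apply HN.
  - pose proof (psum_sub x m q p ltac:(lia)) as E. pose proof (blocksum_nonneg x m q p).
    rewrite Rabs_pos_eq, E by lra. now apply HN.
Qed.

Lemma inHA_finite_support x M : (forall i, inA (x i)) ->
  (forall i n, (M < i)%nat -> x i n = RtoC 0) -> inHA x.
Proof.
  intros HA Hx. apply inHA_of_blocksum_small; [exact HA|]. intros d Hd. exists M. intros m p q Hp.
  unfold blocksum. rewrite (sum_n_m_Rext _ (fun _ => 0)), sum_n_m_R0; [exact Hd|].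
  intros i Hi. rewrite Hx by lia. rewrite Cmod_0. ring.
Qed.

Definition unit_vec (j : nat) : HAraw := fun i _ => if Nat.eq_dec i j then RtoC 1 else RtoC 0.
Definition trunc (y : HAraw) (M : nat) : HAraw := fun i n => if le_dec i M then y i n else RtoC 0.
Definition tail (y : HAraw) (M : nat) : HAraw := fun i n => if le_dec i M then RtoC 0 else y i n.

Lemma inHA_unit_vec j : inHA (unit_vec j).
Proof.
  apply inHA_finite_support with j; [intros; apply inA_const|].
  intros i n Hi. unfold unit_vec. destruct (Nat.eq_dec i j); [lia|reflexivity].
Qed.

Lemma inHA_unit_vec_act j a : inA a -> inHA (HA_act (unit_vec j) a).
Proof.
  intros Ha. apply inHA_finite_support with j.
  - intros i. apply inA_mult; [apply inA_const|exact Ha].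
  - intros i n Hi. unfold HA_act, unit_vec. destruct (Nat.eq_dec i j); [lia|ring].
Qed.

Lemma inHA_trunc y M : (forall i, inA (y i)) -> inHA (trunc y M).
Proof.
  intros HA. apply inHA_finite_support with M.
  - intros i. unfold trunc. destruct (le_dec i M); [apply HA|apply inA_const].
  - intros i n Hi. unfold trunc. destruct (le_dec i M); [lia|reflexivity].
Qed.

Lemma inHA_tail y M : inHA y -> inHA (tail y M).
Proof.
  intros Hy. apply inHA_of_blocksum_small.
  - intros i. unfold tail. destruct (le_dec i M); [apply inA_const|apply Hy].
  - intros d Hd. destruct (blocksum_small_of_inHA y Hy d Hd) as [N HN]. exists N.
    intros m p q Hp. eapply Rle_lt_trans; [|exact (HN m p q Hp)].
    apply sum_n_m_le. intros i. unfold tail. destruct (le_dec i M); [|lra].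
    rewrite Cmod_0. simpl. nra.
Qed.

Lemma psum_tail y M m N : psum (tail y M) m N = blocksum y m M N.
Proof.
  unfold psum, blocksum, sum_n. destruct (le_lt_dec N M) as [HNM|HMN].
  - rewrite (sum_n_m_zero _ (S M) N) by lia.
    rewrite (sum_n_m_Rext _ (fun _ => 0)), sum_n_m_R0; [reflexivity|].
    intros i Hi. unfold tail. destruct (le_dec i M); [|lia]. rewrite Cmod_0. ring.
  - rewrite (sum_n_m_Chasles _ 0 M N) by lia.
    rewrite (sum_n_m_Rext _ (fun _ => 0) 0 M), sum_n_m_R0.
    + change (0 + sum_n_m (fun i => Cmod (tail y M i m) ^ 2) (S M) N = blocksum y m M N).
      rewrite Rplus_0_l. apply sum_n_m_Rext. intros i Hi.
      unfold tail. destruct (le_dec i M); [lia|reflexivity].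
    + intros i Hi. unfold tail. destruct (le_dec i M); [|lia]. rewrite Cmod_0. ring.
Qed.

Lemma psum_trunc_le y M m N : psum (trunc y M) m N <= psum y m M.
Proof.
  unfold psum, sum_n. destruct (le_lt_dec N M) as [HNM|HMN].
  - eapply Rle_trans; [right|apply (psum_mono y m N M HNM)].
    apply sum_n_m_Rext. intros i Hi. unfold trunc. destruct (le_dec i M); [reflexivity|lia].
  - rewrite (sum_n_m_Chasles _ 0 M N) by lia.
    rewrite (sum_n_m_Rext _ (fun _ => 0) (S M) N), sum_n_m_R0.
    + change (sum_n_m (fun i => Cmod (trunc y M i m) ^ 2) 0 M + 0 <= psum y m M).
      rewrite Rplus_0_r. right. apply sum_n_m_Rext. intros i Hi.
      unfold trunc. destruct (le_dec i M); [reflexivity|lia].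
    + intros i Hi. unfold trunc. destruct (le_dec i M); [lia|]. rewrite Cmod_0. ring.
Qed.

Lemma tail_norm_small y : inHA y ->
  forall d, 0 < d -> exists N, forall M, (N <= M)%nat -> HA_norm_le (tail y M) d.
Proof.
  intros Hy d Hd. destruct (blocksum_small_of_inHA y Hy (d ^ 2) ltac:(nra)) as [N HN].
  exists N. intros M HM. split; [lra|]. intros m q. rewrite psum_tail. left. now apply HN.
Qed.

Lemma trunc_add_tail y M : HA_add (trunc y M) (tail y M) = y.
Proof.
  extensionality i; extensionality n. unfold HA_add, trunc, tail. destruct (le_dec i M); ring.
Qed.

Lemma trunc_0 y : trunc y 0 = HA_act (unit_vec 0) (y 0%nat).
Proof.
  extensionality i; extensionality n. unfold HA_act, trunc, unit_vec.
  destruct (le_dec i 0), (Nat.eq_dec i 0); try lia; subst; ring.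
Qed.

Lemma trunc_S y M : trunc y (S M) = HA_add (trunc y M) (HA_act (unit_vec (S M)) (y (S M))).
Proof.
  extensionality i; extensionality n. unfold HA_add, HA_act, trunc, unit_vec.
  destruct (le_dec i (S M)), (le_dec i M), (Nat.eq_dec i (S M)); try lia; subst; ring.
Qed.

Lemma Cmod_row_le (c : nat -> C) (y : HAraw) n lo hi s : HA_norm_le y s ->
  Cmod (sum_n_m (fun i => (c i * y i n)%C) lo hi) <= sqrt (sum_n_m (fun i => Cmod (c i) ^ 2) lo hi) * s.
Proof.
  intros [Hs Hy]. eapply Rle_trans; [apply Cmod_sum_n_m_mul_le|].
  apply Rmult_le_compat_l; [apply sqrt_pos|]. apply sqrt_le_of_sq_le; [exact Hs|].
  eapply Rle_trans; [|apply (Hy n hi)]. apply sum_n_m_le_sum_n. intros; apply pow2_ge_0.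
Qed.

(** * The dual module [H_A'] *)

Definition coord (j : nat) : dualT := fun y => y j.

Lemma in_dual_coord j : in_dual (coord j).
Proof.
  split; [|split; [|split]].
  - intros x [HA _]. apply HA.
  - reflexivity.
  - reflexivity.
  - exists 1. split; [lra|]. intros x r _ [Hr Hx] n. unfold coord. rewrite Rmult_1_l.
    rewrite <- (sqrt_pow2 (Cmod (x j n))) by apply Cmod_ge_0.
    apply sqrt_le_of_sq_le; [exact Hr|]. eapply Rle_trans; [apply psum_coord_le|apply Hx].
Qed.

Lemma in_dual_add f g : in_dual f -> in_dual g -> in_dual (dual_add f g).
Proof.
  intros [Hv [Had [Hac [K [HK HKb]]]]] [Hv' [Had' [Hac' [K' [HK' HKb']]]]].
  unfold dual_add. split; [|split; [|split]].
  - intros x Hx. apply inA_plus; auto.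
  - intros x y Hx Hy. rewrite Had, Had' by auto. extensionality n. ring.
  - intros x a Hx Ha. rewrite Hac, Hac' by auto. extensionality n. ring.
  - exists (K + K'). split; [lra|]. intros x r Hx Hr n. eapply Rle_trans; [apply Cmod_triangle|].
    specialize (HKb x r Hx Hr n). specialize (HKb' x r Hx Hr n). lra.
Qed.

Lemma in_dual_act f a : in_dual f -> inA a -> in_dual (dual_act f a).
Proof.
  intros [Hv [Had [Hac [K [HK HKb]]]]] Ha. pose proof Ha as [[M HM] _].
  assert (HM0 : 0 <= M) by (eapply Rle_trans; [apply Cmod_ge_0|apply (HM O)]).
  unfold dual_act. split; [|split; [|split]].
  - intros x Hx. apply inA_mult; [apply inA_conj|]; auto.
  - intros x y Hx Hy. rewrite Had by auto. extensionality n. ring.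
  - intros x b Hx Hb. rewrite Hac by auto. extensionality n. ring.
  - exists (M * K). split; [nra|]. intros x r Hx Hr n. rewrite Cmod_mult, Cmod_conj, Rmult_assoc.
    apply Rmult_le_compat; auto using Cmod_ge_0. apply (HKb x r Hx Hr n).
Qed.

Definition dual_sub (f g : dualT) : dualT := dual_add f (dual_act g (fun _ => RtoC (-1))).

Lemma in_dual_sub f g : in_dual f -> in_dual g -> in_dual (dual_sub f g).
Proof. intros Hf Hg. apply in_dual_add; [exact Hf|]. apply in_dual_act; [exact Hg|apply inA_const]. Qed.

Lemma dual_sub_apply f g y n : dual_sub f g y n = (f y n - g y n)%C.
Proof. unfold dual_sub, dual_add, dual_act. rewrite Cconj_RtoC. ring. Qed.

(* the finite combination [sum_(lo <= i <= hi) coord i . (a i)^*] of coordinate functionals *)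
Definition coord_comb (a : nat -> seqC) (lo hi : nat) : dualT :=
  fun y n => sum_n_m (fun i => (a i n * y i n)%C) lo hi.

Lemma coord_comb_n a lo : coord_comb a lo lo = dual_act (coord lo) (fun n => Cconj (a lo n)).
Proof.
  extensionality y; extensionality n. unfold coord_comb, dual_act, coord.
  now rewrite sum_n_n, Cconj_conj.
Qed.

Lemma coord_comb_S a lo hi : (lo <= S hi)%nat ->
  coord_comb a lo (S hi) =
  dual_add (coord_comb a lo hi) (dual_act (coord (S hi)) (fun n => Cconj (a (S hi) n))).
Proof.
  intros H. extensionality y; extensionality n. unfold coord_comb, dual_add, dual_act, coord.
  now rewrite sum_n_Sm, Cconj_conj.
Qed.

Lemma in_dual_coord_comb a lo hi : (forall i, inA (a i)) -> (lo <= hi)%nat ->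
  in_dual (coord_comb a lo hi).
Proof.
  intros Ha Hhi. induction Hhi as [|hi Hhi IH].
  - rewrite coord_comb_n. apply in_dual_act; [apply in_dual_coord|now apply inA_conj].
  - rewrite coord_comb_S by lia. apply in_dual_add; [exact IH|].
    apply in_dual_act; [apply in_dual_coord|now apply inA_conj].
Qed.

Lemma coord_comb_norm_le a lo hi B : 0 <= B ->
  (forall n, sum_n_m (fun i => Cmod (a i n) ^ 2) lo hi <= B) ->
  dual_norm_le (coord_comb a lo hi) (sqrt B).
Proof.
  intros HB Ha. split; [apply sqrt_pos|]. intros y s _ Hy n.
  eapply Rle_trans; [apply Cmod_row_le, Hy|].
  apply Rmult_le_compat_r; [apply Hy|]. apply sqrt_le_1_alt, Ha.
Qed.

Section DualRow.

Variable f : dualT.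
Hypothesis f_add : forall x y, inHA x -> inHA y -> f (HA_add x y) = (fun n => Cplus (f x n) (f y n)).
Hypothesis f_act : forall x a, inHA x -> inA a -> f (HA_act x a) = (fun n => Cmult (f x n) (a n)).
Variable Kf : R.
Hypothesis Kf_nonneg : 0 <= Kf.
Hypothesis f_bounded : forall x r, inHA x -> HA_norm_le x r -> normA_le (f x) (Kf * r).

Lemma dual_trunc y M : (forall i, inA (y i)) ->
  f (trunc y M) = (fun n => sum_n (fun i => (f (unit_vec i) n * y i n)%C) M).
Proof.
  intros Hy. induction M as [|M IH].
  - rewrite trunc_0, f_act by auto using inHA_unit_vec. extensionality n. now rewrite sum_O.
  - rewrite trunc_S, f_add, IH, f_act by auto using inHA_unit_vec, inHA_trunc, inHA_unit_vec_act.
    extensionality n. now rewrite sum_Sn.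
Qed.

Lemma dual_trunc_add_tail y M n : inHA y -> f y n = (f (trunc y M) n + f (tail y M) n)%C.
Proof.
  intros Hy. rewrite <- (trunc_add_tail y M) at 1. rewrite f_add; [reflexivity| |].
  - apply inHA_trunc, Hy.
  - now apply inHA_tail.
Qed.

(* testing [f] against the truncated conjugate row gives [P <= Kf * sqrt P] *)
Lemma dual_coef_sq_le M n : sum_n (fun i => Cmod (f (unit_vec i) n) ^ 2) M <= Kf ^ 2.
Proof.
  set (P := sum_n (fun i => Cmod (f (unit_vec i) n) ^ 2) M).
  assert (HP : 0 <= P) by (apply sum_n_m_nonneg; intros; apply pow2_ge_0).
  set (u := trunc (fun i _ => Cconj (f (unit_vec i) n)) M).
  assert (Hu : inHA u) by (apply inHA_trunc; intros; apply inA_const).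
  assert (Hfu : f u n = RtoC P).
  { unfold u. rewrite dual_trunc by (intros; apply inA_const). unfold P, sum_n.
    rewrite <- sum_n_m_RtoC. apply sum_n_m_ext. intros i.
    rewrite <- Cconj_mul_self. apply Cmult_comm. }
  assert (Hnorm : HA_norm_le u (sqrt P)).
  { split; [apply sqrt_pos|]. intros m N. rewrite <- Rsqr_pow2, Rsqr_sqrt by exact HP.
    eapply Rle_trans; [apply psum_trunc_le|].
    right. apply sum_n_m_ext. intros i. now rewrite Cmod_conj. }
  apply le_sq_of_le_mul_sqrt; [exact HP|exact Kf_nonneg|].
  pose proof (f_bounded u (sqrt P) Hu Hnorm n) as H.
  now rewrite Hfu, Cmod_R, Rabs_pos_eq in H.
Qed.

Lemma dual_row_approx N n z : 0 <= z ->
  (forall M, (N <= M)%nat -> sum_n_m (fun i => Cmod (f (unit_vec i) n) ^ 2) (S N) M <= z ^ 2) ->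
  forall y s, inHA y -> HA_norm_le y s ->
  Cmod (f y n - sum_n (fun i => f (unit_vec i) n * y i n) N)%C <= z * s.
Proof.
  intros Hz Hcoef y s Hy Hs. apply Rle_plus_epsilon. intros d Hd.
  destruct (tail_norm_small y Hy (d / (Kf + 1)) ltac:(apply Rdiv_lt_0_compat; lra)) as [M0 HM0].
  set (M := max M0 N).
  assert (E : (f y n - sum_n (fun i => f (unit_vec i) n * y i n) N)%C =
              (sum_n_m (fun i => f (unit_vec i) n * y i n) (S N) M + f (tail y M) n)%C).
  { rewrite (dual_trunc_add_tail y M n Hy), dual_trunc by apply Hy. unfold sum_n.
    rewrite (sum_n_m_Chasles _ 0 N M) by lia. change (plus ?a ?b) with (a + b)%C. ring. }
  rewrite E. eapply Rle_trans; [apply Cmod_triangle|]. apply Rplus_le_compat.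
  - eapply Rle_trans; [apply Cmod_row_le, Hs|]. apply Rmult_le_compat_r; [apply Hs|].
    apply sqrt_le_of_sq_le; [exact Hz|]. apply Hcoef. lia.
  - eapply Rle_trans; [apply f_bounded; [now apply inHA_tail|apply HM0; lia]|].
    apply Rmult_le_reg_r with (Kf + 1); [lra|].
    replace (Kf * (d / (Kf + 1)) * (Kf + 1)) with (Kf * d) by (field; lra). nra.
Qed.

End DualRow.

(** * Elements of the bidual [H_A''] *)

Definition bidual_preimage (F : dualT -> seqC) : HAraw := fun i n => Cconj (F (coord i) n).

Section Bidual.

Variable F : dualT -> seqC.
Hypothesis F_val : forall f, in_dual f -> inA (F f).
Hypothesis F_add : forall f g, in_dual f -> in_dual g ->
  F (dual_add f g) = (fun n => Cplus (F f n) (F g n)).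
Hypothesis F_act : forall f a, in_dual f -> inA a -> F (dual_act f a) = (fun n => Cmult (F f n) (a n)).
Variable K : R.
Hypothesis K_nonneg : 0 <= K.
Hypothesis F_bounded : forall f r, in_dual f -> dual_norm_le f r -> normA_le (F f) (K * r).

Local Notation X := (bidual_preimage F).

Lemma inA_preimage i : inA (X i).
Proof. apply inA_conj, F_val, in_dual_coord. Qed.

Lemma F_coord_comb a lo hi : (forall i, inA (a i)) -> (lo <= hi)%nat ->
  F (coord_comb a lo hi) = (fun n => Cconj (coord_comb a lo hi X n)).
Proof.
  intros Ha Hhi. induction Hhi as [|hi Hhi IH].
  - rewrite coord_comb_n, F_act by (apply in_dual_coord || now apply inA_conj).
    extensionality n. unfold dual_act, coord, bidual_preimage.
    rewrite Cmult_conj, !Cconj_conj. apply Cmult_comm.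
  - rewrite coord_comb_S, F_add, IH, F_act by
      (lia || apply in_dual_coord || now apply inA_conj || now apply in_dual_coord_comb
       || (apply in_dual_act; [apply in_dual_coord|now apply inA_conj])).
    extensionality n. unfold dual_add, dual_act, coord, bidual_preimage.
    rewrite Cplus_conj, Cmult_conj, !Cconj_conj. f_equal. apply Cmult_comm.
Qed.

(* [F f n] only depends on the row [y |-> f y n], through its operator norm *)
Lemma F_sub_le f h n z : in_dual f -> in_dual h -> 0 <= z ->
  (forall y s, inHA y -> HA_norm_le y s -> Cmod (f y n - h y n)%C <= z * s) ->
  Cmod (F f n - F h n)%C <= K * z.
Proof.
  intros Hf Hh Hz Hrow.
  set (d := dual_act (dual_sub f h) (dirac n (RtoC 1))).
  assert (Hd : in_dual d) by (apply in_dual_act; [now apply in_dual_sub|apply inA_dirac]).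
  assert (HFd : F d n = (F f n - F h n)%C).
  { unfold d, dual_sub. rewrite F_act, F_add, F_act;
      auto using in_dual_act, in_dual_add, inA_const, inA_dirac.
    unfold dirac. destruct (Nat.eq_dec n n); [ring|contradiction]. }
  assert (Hnorm : dual_norm_le d z).
  { split; [exact Hz|]. intros y s Hy Hs m. unfold d, dual_act at 1, dirac.
    destruct (Nat.eq_dec m n) as [->|Hmn].
    - rewrite Cconj_RtoC, Cmult_1_l, dual_sub_apply. now apply Hrow.
    - rewrite Cconj_RtoC, Cmult_0_l, Cmod_0. apply Rmult_le_pos; [exact Hz|apply Hs]. }
  rewrite <- HFd. apply (F_bounded d z Hd Hnorm n).
Qed.

Lemma F_local f h n : in_dual f -> in_dual h ->
  (forall y, inHA y -> f y n = h y n) -> F f n = F h n.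
Proof.
  intros Hf Hh Hrow. apply Cminus_eq_of_small. intros eta Heta.
  eapply Rle_trans; [apply (F_sub_le f h n 0); auto; [lra|]|rewrite Rmult_0_r; lra].
  intros y s Hy Hs. rewrite Hrow by exact Hy.
  replace (h y n - h y n)%C with (RtoC 0) by ring. rewrite Cmod_0, Rmult_0_l. lra.
Qed.

(* dual to [dual_coef_sq_le]: test [F] against the functional pairing with the m-th row of [X] *)
Lemma preimage_psum_le m N : psum X m N <= K ^ 2.
Proof.
  set (P := psum X m N).
  assert (HP : 0 <= P) by (apply sum_n_m_nonneg; intros; apply pow2_ge_0).
  set (a := fun i => dirac m (Cconj (X i m))).
  assert (Ha : forall i, inA (a i)) by (intros; apply inA_dirac).
  set (h := coord_comb a 0 N).
  assert (HFh : F h m = RtoC P).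
  { unfold h. rewrite F_coord_comb by (auto; lia). unfold coord_comb, a, dirac.
    destruct (Nat.eq_dec m m); [|contradiction].
    rewrite (sum_n_m_ext _ (fun i => RtoC (Cmod (X i m) ^ 2))) by (intros; apply Cconj_mul_self).
    rewrite sum_n_m_RtoC. apply Cconj_RtoC. }
  assert (Hnorm : dual_norm_le h (sqrt P)).
  { apply coord_comb_norm_le; [exact HP|]. intros n. unfold a, dirac. destruct (Nat.eq_dec n m).
    - right. apply sum_n_m_Rext. intros i _. now rewrite Cmod_conj.
    - rewrite (sum_n_m_Rext _ (fun _ => 0)), sum_n_m_R0; [exact HP|]. intros; rewrite Cmod_0; ring. }
  apply le_sq_of_le_mul_sqrt; [exact HP|exact K_nonneg|].
  pose proof (F_bounded h _ (in_dual_coord_comb a 0 N Ha (Nat.le_0_l N)) Hnorm m) as H.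
  now rewrite HFh, Cmod_R, Rabs_pos_eq in H.
Qed.

Section SpacedBlocks.

Variables (eps : R) (p q nk : nat -> nat).
Hypothesis eps_pos : 0 < eps.
Hypothesis p_ge : forall k, (k <= p k)%nat.
Hypothesis nk_spaced : forall k, (S (nk k) < nk (S k))%nat.
Hypothesis block_large : forall k, eps <= blocksum X (nk k) (p k) (q k).

Local Notation mass k := (blocksum X (nk k) (p k) (q k)).

Lemma mass_pos k : 0 < mass k.
Proof. pose proof (block_large k). lra. Qed.

Lemma p_lt_q k : (p k < q k)%nat.
Proof.
  destruct (le_lt_dec (q k) (p k)) as [Hqp|]; [|assumption].
  pose proof (block_large k) as H. unfold blocksum in H. rewrite sum_n_m_zero in H by lia.
  change (eps <= 0) in H. lra.
Qed.

Lemma nk_lt k j : (k < j)%nat -> (S (nk k) < nk j)%nat.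
Proof. intros Hkj. induction Hkj; [apply nk_spaced|]. pose proof (nk_spaced m). lia. Qed.

Lemma nk_ge k : (k <= nk k)%nat.
Proof. induction k as [|k IH]; [lia|]. pose proof (nk_spaced k). lia. Qed.

Lemma nk_inj k j : nk k = nk j -> k = j.
Proof.
  intros E. destruct (lt_eq_lt_dec k j) as [[H|H]|H]; [|exact H|];
    pose proof (nk_lt _ _ H); lia.
Qed.

Lemma nk_succ_ne k j : nk j <> S (nk k).
Proof.
  intros E. destruct (lt_eq_lt_dec k j) as [[H|H]|H].
  - destruct (Nat.eq_dec j (S k)) as [->|Hj]; [pose proof (nk_spaced k); lia|].
    pose proof (nk_lt (S k) j ltac:(lia)). pose proof (nk_spaced k). lia.
  - subst. lia.
  - pose proof (nk_lt _ _ H). lia.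
Qed.

Definition row_index (n : nat) : nat := epsilon (inhabits O) (fun k => nk k = n).

Lemma row_index_nk k : row_index (nk k) = k.
Proof.
  apply nk_inj. unfold row_index.
  apply (epsilon_spec (inhabits O) (fun j => nk j = nk k)). now exists k.
Qed.

Definition block_coef (k : nat) : nat -> seqC :=
  fun i => dirac (nk k) (Cconj (X i (nk k)) * RtoC (/ mass k))%C.

(* pairs the k-th block of rows at the point [nk k] with the normalised block of [X] *)
Definition block_fun (k : nat) : dualT := coord_comb (block_coef k) (S (p k)) (q k).

Definition glued : dualT :=
  fun y n => if Nat.eq_dec n (nk (row_index n)) then block_fun (row_index n) y n else RtoC 0.

Lemma in_dual_block_fun k : in_dual (block_fun k).
Proof. apply in_dual_coord_comb; [intros; apply inA_dirac|apply p_lt_q]. Qed.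

Lemma block_coef_sq_le k n :
  sum_n_m (fun i => Cmod (block_coef k i n) ^ 2) (S (p k)) (q k) <= / eps.
Proof.
  pose proof (mass_pos k) as Hm.
  assert (Heps : / mass k <= / eps) by (apply Rinv_le_contravar; auto).
  unfold block_coef, dirac. destruct (Nat.eq_dec n (nk k)) as [->|].
  - rewrite (sum_n_m_Rext _ (fun i => (/ mass k) ^ 2 * Cmod (X i (nk k)) ^ 2)).
    + rewrite sum_n_m_Rmult_l. fold (blocksum X (nk k) (p k) (q k)).
      replace ((/ mass k) ^ 2 * mass k) with (/ mass k) by (field; lra). exact Heps.
    + intros i _.
      rewrite Cmod_mult, Cmod_conj, Cmod_R, Rabs_pos_eq by (left; now apply Rinv_0_lt_compat).
      ring.
  - rewrite (sum_n_m_Rext _ (fun _ => 0)), sum_n_m_R0.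
    + left. now apply Rinv_0_lt_compat.
    + intros; rewrite Cmod_0; ring.
Qed.

Lemma block_fun_norm_le k : dual_norm_le (block_fun k) (sqrt (/ eps)).
Proof.
  apply coord_comb_norm_le; [left; now apply Rinv_0_lt_compat|]. apply block_coef_sq_le.
Qed.

Lemma block_fun_preimage k : block_fun k X (nk k) = RtoC 1.
Proof.
  pose proof (mass_pos k) as Hm.
  unfold block_fun, coord_comb, block_coef, dirac. destruct (Nat.eq_dec (nk k) (nk k)); [|contradiction].
  rewrite (sum_n_m_Cext _ (fun i => RtoC (/ mass k * Cmod (X i (nk k)) ^ 2))).
  - rewrite sum_n_m_RtoC, sum_n_m_Rmult_l. f_equal. fold (blocksum X (nk k) (p k) (q k)). field. lra.
  - intros i _. rewrite RtoC_mult, <- Cconj_mul_self. ring.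
Qed.

Lemma glued_nk k y : glued y (nk k) = block_fun k y (nk k).
Proof.
  unfold glued. rewrite row_index_nk. destruct (Nat.eq_dec (nk k) (nk k)); [reflexivity|contradiction].
Qed.

Lemma glued_off y n : n <> nk (row_index n) -> glued y n = RtoC 0.
Proof.
  intros H. unfold glued. destruct (Nat.eq_dec n (nk (row_index n))); [contradiction|reflexivity].
Qed.

Lemma Cmod_block_fun_le k y :
  Cmod (block_fun k y (nk k)) <= sqrt (/ eps * blocksum y (nk k) (p k) (q k)).
Proof.
  assert (Hie : 0 <= / eps) by (left; now apply Rinv_0_lt_compat).
  eapply Rle_trans; [apply Cmod_sum_n_m_mul_le|].
  rewrite sqrt_mult_alt by exact Hie. apply Rmult_le_compat_r; [apply sqrt_pos|].
  apply sqrt_le_1_alt, block_coef_sq_le.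
Qed.

Lemma glued_lim y : inHA y -> is_lim_seq (fun n => Cmod (glued y n)) 0.
Proof.
  intros Hy. apply is_lim_seq_spec. intros d.
  destruct (blocksum_small_of_inHA y Hy (d ^ 2 * eps)) as [N HN].
  { pose proof (cond_pos d). apply Rmult_lt_0_compat; [nra|exact eps_pos]. }
  exists (nk N). intros n Hn. rewrite Rminus_0_r, Rabs_pos_eq by apply Cmod_ge_0.
  destruct (Nat.eq_dec n (nk (row_index n))) as [E|E].
  2: { rewrite glued_off, Cmod_0 by exact E. apply cond_pos. }
  set (k := row_index n) in E. rewrite E, glued_nk.
  assert (Hk : (N <= k)%nat).
  { destruct (le_lt_dec N k) as [|Hlt]; [assumption|]. pose proof (nk_lt _ _ Hlt). lia. }
  eapply Rle_lt_trans; [apply Cmod_block_fun_le|].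
  rewrite <- (sqrt_pow2 d) by (left; apply cond_pos). apply sqrt_lt_1_alt. split.
  - apply Rmult_le_pos; [left; now apply Rinv_0_lt_compat|apply blocksum_nonneg].
  - specialize (HN (nk k) (p k) (q k) ltac:(specialize (p_ge k); lia)).
    apply Rmult_lt_reg_l with eps; [exact eps_pos|].
    rewrite <- Rmult_assoc, Rinv_r by lra. lra.
Qed.

Lemma in_dual_glued : in_dual glued.
Proof.
  split; [|split; [|split]].
  - intros y Hy. apply inA_c0, glued_lim, Hy.
  - intros x y Hx Hy. extensionality n. unfold glued.
    destruct (Nat.eq_dec n (nk (row_index n))); [|ring].
    destruct (in_dual_block_fun (row_index n)) as [_ [Hadd _]]. now rewrite Hadd.
  - intros x a Hx Ha. extensionality n. unfold glued.
    destruct (Nat.eq_dec n (nk (row_index n))); [|ring].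
    destruct (in_dual_block_fun (row_index n)) as [_ [_ [Hact _]]]. now rewrite Hact.
  - exists (sqrt (/ eps)). split; [apply sqrt_pos|]. intros y s Hy Hs n.
    destruct (Nat.eq_dec n (nk (row_index n))) as [E|E].
    + unfold glued. destruct (Nat.eq_dec n (nk (row_index n))); [|contradiction].
      now apply block_fun_norm_le.
    + rewrite glued_off, Cmod_0 by exact E. apply Rmult_le_pos; [apply sqrt_pos|apply Hs].
Qed.

Lemma F_glued_nk k : F glued (nk k) = RtoC 1.
Proof.
  rewrite (F_local glued (block_fun k) (nk k) in_dual_glued (in_dual_block_fun k))
    by (intros; apply glued_nk).
  unfold block_fun. rewrite F_coord_comb by (intros; apply inA_dirac || apply p_lt_q).
  fold (block_fun k). now rewrite block_fun_preimage, Cconj_RtoC.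
Qed.

Lemma F_glued_gap k : F glued (S (nk k)) = RtoC 0.
Proof.
  set (zero_fun := dual_act glued (fun _ => RtoC 0)).
  assert (Hz : in_dual zero_fun) by (apply in_dual_act; [exact in_dual_glued|apply inA_const]).
  rewrite (F_local glued zero_fun (S (nk k)) in_dual_glued Hz).
  - unfold zero_fun. rewrite F_act by (exact in_dual_glued || apply inA_const). ring.
  - intros y _. unfold zero_fun, dual_act. rewrite glued_off; [rewrite Cconj_RtoC; ring|].
    intros E. now apply (nk_succ_ne k (row_index (S (nk k)))).
Qed.

(* [F glued] jumps from 1 to 0 between [nk k] and [nk k + 1], so it is not slowly oscillating *)
Lemma spaced_blocks_absurd : False.
Proof.
  destruct (F_val glued in_dual_glued) as [_ Hosc].
  apply is_lim_seq_spec in Hosc. destruct (Hosc (mkposreal 1 Rlt_0_1)) as [N HN].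
  specialize (HN (nk N) (nk_ge N)). simpl in HN.
  rewrite F_glued_gap, F_glued_nk, Rminus_0_r in HN.
  replace (RtoC 0 - RtoC 1)%C with (- RtoC 1)%C in HN by ring.
  rewrite Cmod_opp, Cmod_1, Rabs_R1 in HN. lra.
Qed.

End SpacedBlocks.

Lemma preimage_in_HA : inHA X.
Proof.
  apply inHA_of_blocksum_small; [exact inA_preimage|].
  intros eps Heps. apply NNPP. intros Hno.
  assert (Hpt : forall m, exists N, forall p q, (N <= p)%nat -> blocksum X m p q < eps).
  { intros m. apply (nonneg_series_blocks_small _ (K ^ 2));
      [intros; apply pow2_ge_0|intros; apply preimage_psum_le|exact Heps]. }
  assert (Hblocks : forall B m0, exists p q n, (B <= p)%nat /\ (m0 < n)%nat /\ eps <= blocksum X n p q).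
  { intros B m0.
    destruct (uniform_bound_upto (fun m N => forall p q, (N <= p)%nat -> blocksum X m p q < eps) Hpt)
      with m0 as [N HN].
    { intros m N N' HNN' H p q Hp. apply H. lia. }
    apply NNPP. intros Hnb. apply Hno. exists (max B N). intros m p q Hp.
    destruct (le_lt_dec m m0) as [Hm|Hm]; [apply HN; lia|].
    apply Rnot_le_lt. intros Hle. apply Hnb. exists p, q, m. repeat split; [lia|lia|exact Hle]. }
  destruct (spaced_sequence (fun p q n => eps <= blocksum X n p q) Hblocks) as [p [q [nk Hseq]]].
  apply (spaced_blocks_absurd eps p q nk Heps); intros k; apply Hseq.
Qed.

Lemma F_near_trunc f n z : in_dual f -> 0 < z ->
  exists N0, forall N, (N0 <= N)%nat -> Cmod (F f n - Cconj (f (trunc X N) n))%C <= K * z.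
Proof.
  intros Hf Hz. pose proof Hf as [_ [Hf_add [Hf_act [Kf [HKf Hf_bounded]]]]].
  set (c := fun i => f (unit_vec i) n).
  destruct (nonneg_series_blocks_small (fun i => Cmod (c i) ^ 2) (Kf ^ 2)) with (z ^ 2)
    as [N0 HN0]; [intros; apply pow2_ge_0|intros; now apply dual_coef_sq_le|nra|].
  exists N0. intros N HN.
  set (h := coord_comb (fun i => dirac n (c i)) 0 N).
  assert (Hh : in_dual h) by (apply in_dual_coord_comb; [intros; apply inA_dirac|lia]).
  assert (Hrow : forall y, h y n = sum_n (fun i => c i * y i n)%C N).
  { intros y. unfold h, coord_comb, dirac. destruct (Nat.eq_dec n n); [reflexivity|contradiction]. }
  assert (HFh : F h n = Cconj (f (trunc X N) n)).
  { unfold h. rewrite F_coord_comb by (intros; apply inA_dirac || lia). fold h.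
    rewrite Hrow, (dual_trunc f Hf_add Hf_act) by exact inA_preimage. reflexivity. }
  rewrite <- HFh. apply F_sub_le; [exact Hf|exact Hh|lra|]. intros y s Hy Hs. rewrite Hrow.
  apply (dual_row_approx f Hf_add Hf_act Kf HKf Hf_bounded); [lra| |exact Hy|exact Hs].
  intros M HM. left. apply HN0. lia.
Qed.

Lemma F_eq_conj_eval f : in_dual f -> F f = (fun n => Cconj (f X n)).
Proof.
  intros Hf. pose proof Hf as [_ [Hf_add [Hf_act [Kf [HKf Hf_bounded]]]]].
  extensionality n. apply Cminus_eq_of_small. intros eta Heta.
  destruct (F_near_trunc f n (eta / (2 * (K + 1))) Hf) as [N0 HN0].
  { apply Rdiv_lt_0_compat; lra. }
  destruct (tail_norm_small X preimage_in_HA (eta / (2 * (Kf + 1)))) as [M0 HM0].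
  { apply Rdiv_lt_0_compat; lra. }
  set (N := max N0 M0).
  rewrite (dual_trunc_add_tail f Hf_add X N n preimage_in_HA), Cplus_conj.
  replace (F f n - (Cconj (f (trunc X N) n) + Cconj (f (tail X N) n)))%C
    with ((F f n - Cconj (f (trunc X N) n)) - Cconj (f (tail X N) n))%C by ring.
  eapply Rle_trans; [apply Cmod_triangle|]. rewrite Cmod_opp, Cmod_conj.
  pose proof (HN0 N ltac:(lia)) as H1.
  pose proof (Hf_bounded (tail X N) _ (inHA_tail X N preimage_in_HA) (HM0 N ltac:(lia)) n) as H2.
  pose proof (mul_div_double_succ_le K eta K_nonneg Heta).
  pose proof (mul_div_double_succ_le Kf eta HKf Heta). lra.
Qed.

End Bidual.

Theorem theorem6p1 : A_Cstar_reflexive.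
Proof.
  intros F [F_val [F_add [F_act [K [K_nonneg F_bounded]]]]].
  exists (bidual_preimage F). split.
  - now apply (preimage_in_HA F F_val F_add F_act K).
  - intros f Hf. now apply (F_eq_conj_eval F F_val F_add F_act K).
Qed.
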